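(* Let $\mathbf{b}\in H_{1,2,2}$ be primary. If $\mathbf{b}-1\in I$, then $\overline{\mathbf{b}}$ is primary. If $\mathbf{b}-(1+2\mathbf{v}_3)\in I$, then $-\overline{\mathbf{b}}$ is primary.
   Context: Let $\mathbf{i},\mathbf{j},\mathbf{k}$ be the standard quaternion units; $\overline{\mathbf{q}}=q_1-q_2\mathbf{i}-q_3\mathbf{j}-q_4\mathbf{k}$ is the conjugate of $\mathbf{q}=q_1+q_2\mathbf{i}+q_3\mathbf{j}+q_4\mathbf{k}$. $H_{1,2,2}$ is the subring of the quaternions equal to the $\mathbb{Z}$-module generated by $\mathbf{v}_1=1$, $\mathbf{v}_2=\mathbf{i}$, $\mathbf{v}_3=\tfrac12(1+\mathbf{i}+\sqrt2\,\mathbf{j})$, $\mathbf{v}_4=\tfrac12(1+\mathbf{i}+\sqrt2\,\mathbf{k})$, closed under conjugation. Let $I = 2(1+\mathbf{i})H_{1,2,2}$ (equal to $H_{1,2,2}\,2(1+\mathbf{i})$). An element $\mathbf{q}\in H_{1,2,2}$ is primary if $\mathbf{q}-1\in I$ or $\mathbf{q}-(1+2\mathbf{v}_3)\in I$. *)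

From Stdlib Require Import Reals ZArith.
Open Scope R_scope.

Record quat := Quat { q1 : R; q2 : R; q3 : R; q4 : R }.

Definition qadd (p q : quat) : quat :=
  Quat (q1 p + q1 q) (q2 p + q2 q) (q3 p + q3 q) (q4 p + q4 q).
Definition qopp (p : quat) : quat := Quat (- q1 p) (- q2 p) (- q3 p) (- q4 p).
Definition qsub (p q : quat) : quat := qadd p (qopp q).
Definition qscale (r : R) (p : quat) : quat :=
  Quat (r * q1 p) (r * q2 p) (r * q3 p) (r * q4 p).
(* Hamilton product: i^2 = j^2 = k^2 = ijk = -1 *)
Definition qmul (p q : quat) : quat :=
  Quat (q1 p * q1 q - q2 p * q2 q - q3 p * q3 q - q4 p * q4 q)
       (q1 p * q2 q + q2 p * q1 q + q3 p * q4 q - q4 p * q3 q)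
       (q1 p * q3 q - q2 p * q4 q + q3 p * q1 q + q4 p * q2 q)
       (q1 p * q4 q + q2 p * q3 q - q3 p * q2 q + q4 p * q1 q).
Definition qconj (p : quat) : quat := Quat (q1 p) (- q2 p) (- q3 p) (- q4 p).

Definition qone : quat := Quat 1 0 0 0.
Definition qi : quat := Quat 0 1 0 0.

(* the Z-basis of H_{1,2,2} *)
Definition v1 : quat := qone.
Definition v2 : quat := qi.
Definition v3 : quat := Quat (1/2) (1/2) (sqrt 2 / 2) 0.
Definition v4 : quat := Quat (1/2) (1/2) 0 (sqrt 2 / 2).

Definition inH (q : quat) : Prop :=
  exists a b c d : Z,
    q = qadd (qadd (qscale (IZR a) v1) (qscale (IZR b) v2))
             (qadd (qscale (IZR c) v3) (qscale (IZR d) v4)).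

Definition gen2 : quat := qscale 2 (qadd qone qi).
Definition inI (q : quat) : Prop := exists h : quat, inH h /\ q = qmul gen2 h.

Definition c3 : quat := qadd qone (qscale 2 v3).

Definition primary (q : quat) : Prop :=
  inH q /\ (inI (qsub q qone) \/ inI (qsub q c3)).

(** The ideal [I] is stable under conjugation: [conj (2(1+i) h) = conj h * 2(1-i)]
    is again a left multiple of [2(1+i)] by an element of [H_{1,2,2}].  Hence
    [conj b - 1 = conj (b - 1)] lies in [I].  For the second residue class,
    [- conj b - c = - conj (b - c) - (c + conj c)] with [c = 1 + 2 v3], and the
    reduced trace [c + conj c = 4 = 2(1+i)(1-i)] lies in [I] as well. *)

From Stdlib Require Import Reals ZArith Lra.
Open Scope R_scope.

Ltac quat_unfold :=
  unfold qsub, c3, gen2, qadd, qopp, qscale, qmul, qconj, qone, qi, v1, v2, v3, v4;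
  cbn.

Lemma qconj_one : qconj qone = qone.
Proof. quat_unfold; f_equal; lra. Qed.

Lemma qconj_sub (p q : quat) : qconj (qsub p q) = qsub (qconj p) (qconj q).
Proof. destruct p, q; quat_unfold; f_equal; lra. Qed.

Lemma qmul_addr (p q r : quat) : qmul p (qadd q r) = qadd (qmul p q) (qmul p r).
Proof. destruct p, q, r; quat_unfold; f_equal; ring. Qed.

Lemma qmul_oppr (p q : quat) : qmul p (qopp q) = qopp (qmul p q).
Proof. destruct p, q; quat_unfold; f_equal; ring. Qed.

Lemma qopp_conj_sub (b c : quat) :
  qsub (qopp (qconj b)) c = qopp (qadd (qconj (qsub b c)) (qadd c (qconj c))).
Proof. destruct b, c; quat_unfold; f_equal; lra. Qed.

Definition hcomb (a b c d : Z) : quat :=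
  qadd (qadd (qscale (IZR a) v1) (qscale (IZR b) v2))
       (qadd (qscale (IZR c) v3) (qscale (IZR d) v4)).

Lemma inH_hcomb (a b c d : Z) : inH (hcomb a b c d).
Proof. exists a, b, c, d; reflexivity. Qed.

Ltac hcomb_solve :=
  unfold hcomb; rewrite ?plus_IZR, ?opp_IZR; quat_unfold; f_equal; lra.

(* [v3 + conj v3 = v4 + conj v4 = 1] *)
Lemma qconj_hcomb (a b c d : Z) :
  qconj (hcomb a b c d) = hcomb (a + c + d) (- b) (- c) (- d).
Proof. hcomb_solve. Qed.

Lemma qopp_hcomb (a b c d : Z) :
  qopp (hcomb a b c d) = hcomb (- a) (- b) (- c) (- d).
Proof. hcomb_solve. Qed.

Lemma qadd_hcomb (a b c d a' b' c' d' : Z) :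
  qadd (hcomb a b c d) (hcomb a' b' c' d') = hcomb (a + a') (b + b') (c + c') (d + d').
Proof. hcomb_solve. Qed.

(* [conj (2(1+i) h) = 2(1+i) h'] with [h' = (1-i) (conj h) (1-i) / 2]; this map
   sends [1, i, v3, v4] to [-i, -1, -v3, -v4]. *)
Lemma qconj_gen2_mul (a b c d : Z) :
  qconj (qmul gen2 (hcomb a b c d)) = qmul gen2 (hcomb (- b) (- a) (- c) (- d)).
Proof. hcomb_solve. Qed.

Lemma inH_conj (q : quat) : inH q -> inH (qconj q).
Proof.
  intros [a [b [c [d ->]]]].
  change (inH (qconj (hcomb a b c d))); rewrite qconj_hcomb; apply inH_hcomb.
Qed.

Lemma inH_opp (q : quat) : inH q -> inH (qopp q).
Proof.
  intros [a [b [c [d ->]]]].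
  change (inH (qopp (hcomb a b c d))); rewrite qopp_hcomb; apply inH_hcomb.
Qed.

Lemma inH_add (p q : quat) : inH p -> inH q -> inH (qadd p q).
Proof.
  intros [a [b [c [d ->]]]] [a' [b' [c' [d' ->]]]].
  change (inH (qadd (hcomb a b c d) (hcomb a' b' c' d'))).
  rewrite qadd_hcomb; apply inH_hcomb.
Qed.

Lemma inI_conj (q : quat) : inI q -> inI (qconj q).
Proof.
  intros [h [[a [b [c [d ->]]]] ->]].
  exists (hcomb (- b) (- a) (- c) (- d)); split.
  - apply inH_hcomb.
  - apply qconj_gen2_mul.
Qed.

Lemma inI_opp (q : quat) : inI q -> inI (qopp q).
Proof.
  intros [h [Hh ->]]; exists (qopp h); split.
  - apply inH_opp; exact Hh.
  - symmetry; apply qmul_oppr.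
Qed.

Lemma inI_add (p q : quat) : inI p -> inI q -> inI (qadd p q).
Proof.
  intros [g [Hg ->]] [h [Hh ->]]; exists (qadd g h); split.
  - apply inH_add; assumption.
  - symmetry; apply qmul_addr.
Qed.

Lemma inI_c3_trace : inI (qadd c3 (qconj c3)).
Proof. exists (hcomb 1 (-1) 0 0); split; [apply inH_hcomb | hcomb_solve]. Qed.

Theorem lemma16 : forall b : quat, primary b ->
  (inI (qsub b qone) -> primary (qconj b)) /\
  (inI (qsub b c3) -> primary (qopp (qconj b))).
Proof.
  intros b [Hb _]; split; intros Hres; split.
  - apply inH_conj; exact Hb.
  - left; rewrite <- qconj_one, <- qconj_sub; apply inI_conj; exact Hres.
  - apply inH_opp, inH_conj; exact Hb.
  - right; rewrite qopp_conj_sub.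
    apply inI_opp, inI_add; [apply inI_conj; exact Hres | apply inI_c3_trace].
Qed.
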